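(* Let $d=(d_1,\dots,d_n)$ be a degree sequence with complementary sequence $\overline d$, and let $k\in\{1,\dots,m(d)\}$. Suppose that no nonzero entry in row $k+1$ of $M(d)$ lies in the same column as a nonzero entry in row $k$ (this condition is vacuous if $k=n$), and suppose that the first $k$ rows of $M(d)$ contain at least one nonzero entry. If the leftmost nonzero entry among the first $k$ rows of $M(d)$ lies in column $j$, then $\Delta_{n+1-j}(\overline d)=\Delta_k(d)$ (and $1\le n+1-j\le m(\overline d)$).
   Context: Degree sequences $d=(d_1,\dots,d_n)$ (of finite simple graphs, terms may be $0$) are listed in nonincreasing order; $\overline d=(n-1-d_n,\dots,n-1-d_1)$ is the complementary sequence. $m(d)=\max\{i : d_i\ge i-1\}$. For integers $k\ge 0$, $\Delta_k(d)=k(k-1)+\sum_{i>k}\min\{k,d_i\}-\sum_{i\le k}d_i$. The corrected Ferrers diagram $F(d)$ is the $n\times n$ matrix whose diagonal entries are $0$ and in which, for each $i$, the first $d_i$ off-diagonal entries of row $i$ (reading left to right, skipping the diagonal position) are $1$ and all other entries are $0$. The difference matrix is $M(d)=F(d)^T-F(d)$. *)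

(* Sequences are 1-indexed as in the paper:
   for d : seq nat of length n, d_i := dseq d i = nth 0 d (i-1), 1 <= i <= n. *)
From mathcomp Require Import all_boot all_order all_algebra.
Set Implicit Arguments. Unset Strict Implicit. Unset Printing Implicit Defensive.
Import GRing.Theory Num.Theory.

Definition dseq (d : seq nat) (i : nat) : nat := nth 0 d i.-1.

(* d is the degree sequence of a finite simple graph on vertex set {1..n}
   (vertex i+1 represented by i : 'I_n), listed in nonincreasing order. *)
Definition graphic (d : seq nat) : Prop :=
  exists e : rel 'I_(size d),
    [/\ symmetric e, irreflexive e &
        forall i : 'I_(size d), #|[set j | e i j]| = nth 0 d i].

Definition degree_sequence (d : seq nat) : Prop :=
  sorted geq d /\ graphic d.

Definition compl_seq (d : seq nat) : seq nat :=
  [seq (size d).-1 - x | x <- rev d].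

Definition mval (d : seq nat) : nat :=
  \max_(1 <= i < (size d).+1 | i.-1 <= dseq d i) i.

Definition Delta (d : seq nat) (k : nat) : int :=
  ((k * k.-1)%:Z + (\sum_(k.+1 <= i < (size d).+1) minn k (dseq d i))%:Z
   - (\sum_(1 <= i < k.+1) dseq d i)%:Z)%R.

(* Diagonal entries are 0; off-diagonal entry (i,j) is the p-th off-diagonal
   position of row i, where p = j if j < i and p = j - 1 if j > i;
   it is 1 iff p <= d_i. *)
Definition Ferrers (d : seq nat) (i j : nat) : int :=
  if i == j then 0%R
  else if (if j < i then j else j.-1) <= dseq d i then 1%R else 0%R.

Definition Mdiff (d : seq nat) (i j : nat) : int :=
  (Ferrers d j i - Ferrers d i j)%R.

From mathcomp Require Import all_boot all_order all_algebra.
From mathcomp Require Import zify.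
Set Implicit Arguments. Unset Strict Implicit.

(* Write n = size d and B_d(a,b ; c,e) (Mblock d a b c e below) for the sum
   of the entries M(d)_{ix}, a <= i < b, c <= x < e.  The proof rests on two block-sum formulas for Delta:
   - if d_i <= n-1 and d_i >= k-1 for every i <= k, then
       Delta_k(d) = B_d(1,k+1 ; k+1,n+1)              (Delta_as_block);
   - M(dbar) is M(d) rotated by a half turn and transposed
     (Mdiff_compl_seq), hence, if d_j <= j-1,
       Delta_{n+1-j}(dbar) = B_d(1,j ; j,n+1)          (Delta_compl_as_block).
   For the theorem one first shows k < j (the top-left k x k block of M(d)
   vanishes, Mdiff_top_left) and that the disjointness hypothesis forces
   d_j <= k and d_{k+1} <= j-2 (column_separation); the latter makes the
   block rows k+1..j-1, columns j..n vanish, and the leftmost-column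
   hypothesis makes the block rows 1..k, columns k+1..j-1 vanish.  Both block
   sums therefore reduce to B_d(1,k+1 ; j,n+1).  The bound on m(dbar) is the
   inequality dbar_{n+1-j} >= n-j, again a restatement of d_j <= j-1. *)

Lemma dseq_mono (d : seq nat) i i' :
  sorted geq d -> i <= i' -> dseq d i' <= dseq d i.
Proof.
move=> sd le_ii'; rewrite /dseq.
case: (ltnP i'.-1 (size d)) => hi'; last by rewrite nth_default.
have geq_trans : transitive geq by move=> a b c hba hcb; apply: leq_trans hcb hba.
by apply: (sorted_leq_nth geq_trans leqnn); rewrite ?inE /=; lia.
Qed.

Lemma dseq_le_graphic (d : seq nat) i : graphic d -> dseq d i <= (size d).-1.
Proof.
case=> e [_ irr_e deg_e]; rewrite /dseq.
case: (ltnP i.-1 (size d)) => hi; last by rewrite nth_default.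
rewrite -(deg_e (Ordinal hi)).
have -> : (size d).-1 = #|[set~ Ordinal hi]| by rewrite cardsC1 card_ord.
by apply/subset_leq_card/subsetP => x; rewrite !inE; apply: contraTneq => ->; rewrite irr_e.
Qed.

Lemma size_compl_seq d : size (compl_seq d) = size d.
Proof. by rewrite size_map size_rev. Qed.

Lemma dseq_compl_seq d i : 1 <= i <= size d ->
  dseq (compl_seq d) i = (size d).-1 - dseq d ((size d).+1 - i).
Proof.
move=> hi; rewrite /dseq /compl_seq (nth_map 0) ?size_rev; last lia.
by rewrite nth_rev; [congr (_ - nth _ _ _); lia | lia].
Qed.

Lemma mval_spec (d : seq nat) k : sorted geq d -> 1 <= k <= mval d ->
  k.-1 <= dseq d k.
Proof.
move=> sd /andP[k_gt0 k_le].
have [/hasP[i]|/hasPn no_i] :=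
  boolP (has (fun i => (i.-1 <= dseq d i) && (k <= i)) (index_iota 1 (size d).+1)).
  rewrite mem_index_iota => hi /andP[di ki].
  by have := dseq_mono sd ki; lia.
suff : mval d <= k.-1 by lia.
by apply/bigmax_leqP_seq => i ri Pi; have := no_i i ri; rewrite Pi /=; lia.
Qed.

Lemma le_mval (d : seq nat) i : 1 <= i <= size d -> i.-1 <= dseq d i ->
  i <= mval d.
Proof.
move=> hi di; apply: (@leq_bigmax_seq _ _ _ id) => //.
by rewrite mem_index_iota; lia.
Qed.

Lemma sum_indicator_leq a b x :
  \sum_(a <= i < b) ((i <= x) : nat) = minn b x.+1 - a.
Proof.
elim: b => [|b IH]; first by rewrite big_geq.
case: (leqP a b) => ab; last by rewrite big_geq //; lia.
by rewrite big_nat_recr //= IH; case: (leqP b x) => /=; lia.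
Qed.

Lemma Mdiff_above d i c : i < c ->
  Mdiff d i c = (((i <= dseq d c) : nat)%:Z - ((c.-1 <= dseq d i) : nat)%:Z)%R.
Proof.
move=> ic; rewrite /Mdiff /Ferrers (gtn_eqF ic) (ltn_eqF ic) ic ltnNge (ltnW ic).
by case: (i <= dseq d c); case: (c.-1 <= dseq d i).
Qed.

Lemma Mdiff_antisym d i c : Mdiff d i c = (- Mdiff d c i)%R.
Proof. by rewrite /Mdiff GRing.opprB. Qed.

Lemma Mdiff_above_eq0 d i c : i < c ->
  (Mdiff d i c == 0%R) = ((i <= dseq d c) == (c.-1 <= dseq d i)).
Proof.
by move=> ic; rewrite Mdiff_above //; case: (i <= dseq d c); case: (c.-1 <= dseq d i).
Qed.

Lemma Mdiff_compl_seq d c i : 1 <= c < i -> i <= size d ->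
  Mdiff (compl_seq d) ((size d).+1 - i) ((size d).+1 - c) = Mdiff d c i.
Proof.
move=> hci hi; rewrite !Mdiff_above; try lia.
rewrite !dseq_compl_seq; try lia.
have -> : (size d).+1 - ((size d).+1 - c) = c by lia.
have -> : (size d).+1 - ((size d).+1 - i) = i by lia.
lia.
Qed.

Lemma Mdiff_top_left d k a b : sorted geq d -> k.-1 <= dseq d k ->
  a <= k -> b <= k -> Mdiff d a b = 0%R.
Proof.
move=> sd dk.
have above : forall a b, a < b <= k -> Mdiff d a b = 0%R.
  move=> {}a {}b hab; apply/eqP; rewrite Mdiff_above_eq0; last lia.
  have da : dseq d k <= dseq d a by apply: dseq_mono; lia.
  have db : dseq d k <= dseq d b by apply: dseq_mono; lia.
  lia.
move=> ak bk; case: (ltngtP a b) => hab.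
- by apply: above; lia.
- by rewrite Mdiff_antisym above ?GRing.oppr0 //; lia.
- by rewrite hab /Mdiff GRing.subrr.
Qed.

Definition Mblock (d : seq nat) (a b c e : nat) : int :=
  (\sum_(a <= i < b) \sum_(c <= x < e) Mdiff d i x)%R.

Lemma Mblock_split_rows d a m b c e : a <= m <= b ->
  Mblock d a b c e = (Mblock d a m c e + Mblock d m b c e)%R.
Proof. by move=> /andP[am mb]; rewrite /Mblock -big_cat_nat. Qed.

Lemma Mblock_split_cols d a b c m e : c <= m <= e ->
  Mblock d a b c e = (Mblock d a b c m + Mblock d a b m e)%R.
Proof.
by move=> /andP[cm me]; rewrite /Mblock -big_split; apply: eq_bigr => i _; rewrite -big_cat_nat.
Qed.

Lemma Mblock_eq0 d a b c e :
  (forall i x, a <= i < b -> c <= x < e -> Mdiff d i x = 0%R) ->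
  Mblock d a b c e = 0%R.
Proof.
move=> M0; rewrite /Mblock big1_seq // => i; rewrite mem_index_iota => /andP[_ hi].
by rewrite big1_seq // => x; rewrite mem_index_iota => /andP[_ hx]; apply: M0.
Qed.

Lemma big_nat_reflect (R : Type) (idx : R) (op : Monoid.com_law idx)
    (N a b : nat) (F : nat -> R) : a <= b <= N.+1 ->
  \big[op/idx]_(a <= i < b) F i = \big[op/idx]_(N.+1 - b <= i < N.+1 - a) F (N - i).
Proof.
move=> /andP[]; elim: b => [|b IH] ab bN; first by rewrite !big_geq //; lia.
have [ab'|ba] := leqP a b; last by rewrite (_ : a = b.+1) ?big_geq //; lia.
rewrite big_nat_recr // IH ?(ltnW bN) // (@big_ltn _ _ _ (N - b)); last lia.
rewrite Monoid.mulmC (_ : N - (N - b) = b); last lia.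
by rewrite (_ : (N - b).+1 = N.+1 - b); last lia.
Qed.

Lemma Posz_sum (I : Type) (r : seq I) (P : pred I) (F : I -> nat) :
  Posz (\sum_(i <- r | P i) F i) = (\sum_(i <- r | P i) Posz (F i))%R.
Proof. by elim/big_rec2: _ => // i x y _ <-; rewrite PoszD. Qed.

(* The two nat sums of Delta_k(d), rewritten as counts of ones in the
   block rows 1..k, columns k+1..n of F(d)^T and of F(d). *)
Lemma sum_min_as_count d k :
  \sum_(k.+1 <= c < (size d).+1) minn k (dseq d c)
  = \sum_(1 <= i < k.+1) \sum_(k.+1 <= c < (size d).+1) ((i <= dseq d c) : nat).
Proof.
by rewrite exchange_big_nat; apply: eq_big_nat => c _; rewrite sum_indicator_leq; lia.
Qed.

Lemma sum_head_as_count d k :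
  (forall i, 1 <= i <= k -> k.-1 <= dseq d i <= (size d).-1) ->
  \sum_(1 <= i < k.+1) dseq d i
  = k * k.-1 + \sum_(1 <= i < k.+1) \sum_(k.+1 <= c < (size d).+1)
                 ((c.-1 <= dseq d i) : nat).
Proof.
move=> hd.
have -> : k * k.-1 = \sum_(1 <= i < k.+1) k.-1 by rewrite sum_nat_const_nat subn1.
rewrite -big_split /=.
apply: eq_big_nat => i hi.
under eq_big_nat => c _ do rewrite -subn1 leq_subLR add1n.
by rewrite sum_indicator_leq; have := hd i hi; lia.
Qed.

Lemma Delta_as_block d k :
  (forall i, 1 <= i <= k -> k.-1 <= dseq d i <= (size d).-1) ->
  Delta d k = Mblock d 1 k.+1 k.+1 (size d).+1.
Proof.
move=> hd; rewrite /Delta (sum_head_as_count hd) sum_min_as_count.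
have -> : Mblock d 1 k.+1 k.+1 (size d).+1 =
    (\sum_(1 <= i < k.+1) \sum_(k.+1 <= c < (size d).+1)
       (((i <= dseq d c) : nat)%:Z - ((c.-1 <= dseq d i) : nat)%:Z))%R.
  by apply: eq_big_nat => i hi; apply: eq_big_nat => c hc; apply: Mdiff_above; lia.
under [RHS]eq_bigr => i _ do rewrite GRing.sumrB -!Posz_sum.
rewrite GRing.sumrB -!Posz_sum.
lia.
Qed.

Lemma Delta_compl_as_block d j : sorted geq d ->
  1 <= j <= size d -> dseq d j <= j.-1 ->
  Delta (compl_seq d) ((size d).+1 - j) = Mblock d 1 j j (size d).+1.
Proof.
move=> sd hj dj.
rewrite Delta_as_block; last first.
  move=> i hi; rewrite size_compl_seq dseq_compl_seq; last lia.
  have : dseq d ((size d).+1 - i) <= dseq d j by apply: dseq_mono; lia.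
  lia.
have e1 : (size d).+2 - (size d).+1 = 1 by lia.
have ej : (size d).+2 - ((size d).+1 - j).+1 = j by lia.
rewrite /Mblock size_compl_seq exchange_big_nat (@big_nat_reflect _ _ _ (size d).+1); last lia.
rewrite e1 ej; apply: eq_big_nat => i hi.
rewrite (@big_nat_reflect _ _ _ (size d).+1); last lia.
rewrite ej subn1 /=; apply: eq_big_nat => x hx.
by rewrite Mdiff_compl_seq //; lia.
Qed.

Lemma column_separation d k j i0 : sorted geq d ->
  i0 <= k -> k < j ->
  (Mdiff d k.+1 j != 0%R -> Mdiff d k j = 0%R) ->
  Mdiff d i0 j != 0%R ->
  dseq d j <= k /\ dseq d k.+1 <= j.-2.
Proof.
move=> sd i0k kj disj Mi0.
have dk := dseq_mono sd i0k; have dk1 := dseq_mono sd (leqnSn k).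
move: Mi0; rewrite Mdiff_above_eq0; last lia.
have [kj1|jk1] := ltnP k.+1 j; last by rewrite (_ : j = k.+1); lia.
(* M_{i0 j} = 1 forces M_{k j} = M_{k+1 j} = 1 unless d_j <= k, and
   M_{i0 j} = -1 forces M_{k j} = M_{k+1 j} = -1 unless d_{k+1} <= j-2 *)
have : (Mdiff d k.+1 j != 0%R) ==> (Mdiff d k j == 0%R).
  by apply/implyP => /disj ->.
by rewrite !Mdiff_above_eq0; lia.
Qed.

Lemma Mblock_middle_eq0 d k j e : sorted geq d ->
  dseq d j <= k -> dseq d k.+1 <= j.-2 ->
  Mblock d k.+1 j j e = 0%R.
Proof.
move=> sd djk dk1j; apply: Mblock_eq0 => i x hi hx; apply/eqP.
have dx : dseq d x <= dseq d j by apply: dseq_mono; lia.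
have di : dseq d i <= dseq d k.+1 by apply: dseq_mono; lia.
rewrite Mdiff_above_eq0; lia.
Qed.

Unset Implicit Arguments.
Theorem lemma9 (d : seq nat) (k j : nat) :
  degree_sequence d ->
  1 <= k <= mval d ->
  (k < size d ->
     forall c, 1 <= c <= size d ->
       Mdiff d k.+1 c != 0%R -> Mdiff d k c = 0%R) ->
  1 <= j <= size d ->
  (exists2 i, 1 <= i <= k & Mdiff d i j != 0%R) ->
  (forall i c, 1 <= i <= k -> 1 <= c < j -> Mdiff d i c = 0%R) ->
  Delta (compl_seq d) ((size d).+1 - j) = Delta d k /\
  1 <= (size d).+1 - j <= mval (compl_seq d).
Proof.
move=> [sd gd] km disj hj [i0 hi0 Mi0] leftmost.
have dk := mval_spec sd km.
(* the nonzero entry M_{i0 j} lies outside the vanishing top-left k x k block *)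
have kj : k < j.
  rewrite ltnNge; apply: contra Mi0 => jk; apply/eqP.
  by apply: (Mdiff_top_left sd dk); lia.
have [djk dk1j] : dseq d j <= k /\ dseq d k.+1 <= j.-2.
  by apply: (column_separation sd _ kj (disj _ j _) Mi0); lia.
have -> : Delta d k = Mblock d 1 k.+1 k.+1 (size d).+1.
  apply: Delta_as_block => i /andP[_ ik].
  by rewrite dseq_le_graphic // andbT (leq_trans dk) ?dseq_mono.
split.
  rewrite Delta_compl_as_block //; last lia.
  rewrite (@Mblock_split_rows d 1 k.+1 j); last lia.
  rewrite (@Mblock_split_cols d 1 k.+1 k.+1 j); last lia.
  rewrite Mblock_middle_eq0 // (@Mblock_eq0 d 1 k.+1 k.+1 j) => [|i c hi hc].
    by rewrite GRing.add0r GRing.addr0.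
  by apply: leftmost; lia.
apply/andP; split; first lia.
apply: le_mval; rewrite ?size_compl_seq ?dseq_compl_seq; try lia.
by rewrite subKn; lia.
Qed.
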